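(* Assume there are constants $\gamma_t\ge 0$ ($t=0,\dots,T-1$) with $|C_t(x)-C_t(y)|\le\gamma_t|x-y|$ for all $x,y$. Then for every $t=0,1,\dots,T-1$ and all $x'\le x$: $H_t(x')-H_t(x)\le\bar\psi_t(x-x',x)$ and $V_t(x')-V_t(x)\le\bar\varphi_t(x-x',x)$.
   Context: Model. Fix an integer horizon $T\ge 2$, a discount factor $\alpha\in(0,1]$, and for $t=0,\dots,T-1$: unit ordering costs $c_t\in\mathbb R$, a salvage coefficient $c_T\in\mathbb R$, setup costs $K_t\ge 0$, functions $G_t:\mathbb R\to\mathbb R$, and independent nonnegative random demands $D_0,\dots,D_{T-1}$ with right-continuous distribution functions $F_t$ and finite means; all expectations appearing are assumed finite. Put $C_t(y)=(c_t-\alpha c_{t+1})y+G_t(y)+\alpha c_{t+1}E[D_t]$. Standing assumptions: (i) each $C_t$ is convex with $C_t(y)\to+\infty$ as $|y|\to\infty$; (ii) $K_t\ge \alpha K_{t+1}$ for $t=0,\dots,T-2$. Grid construction. Fix $\theta>0$, $z_m=m\theta$, $Z_\theta=\{z_m:m\in\mathbb Z\}$, $f_t(n)=F_t(z_{n+1})-F_t(z_n)$ ($n\ge -1$). $C^m_t=\min\{y: C_t(y)=\min_x C_t(x)\}$; with $z_{n_0}<C^m_t\le z_{n_0+1}$, $S^U_t=\min\{z_m\in Z_\theta: z_m\ge C^m_t,\ C_t(z_m)>C_t(z_{n_0})+K_t\}$. $s_{T-1}$ is a point with $s_{T-1}\le C^m_{T-1}$, $C_{T-1}(s_{T-1})=C_{T-1}(C^m_{T-1})+K_{T-1}$;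 $\bar I_{T-1}=s_{T-1}$. For $t=T-2,\dots,0$: $I_t=\max\{z_m\in Z_\theta: z_m<\min(\bar I_{t+1}-\theta,C^m_t)\}$, $\bar I_t=\max\{z_m\in Z_\theta: z_m\le I_t,\ C_t(z_m)>C_t(I_t)+K_t\}+\theta$. $H_{T-1}=C_{T-1}$, $S_{T-1}=C^m_{T-1}$; $V_t(y)=H_t(S_t)+K_t$ for $y<s_t$, $V_t(y)=H_t(y)$ for $y\ge s_t$. For $t=T-2,\dots,0$: $H_t(y)=C_t(y)+\alpha\sum_{n=-1}^\infty V_{t+1}(y-z_n)f_t(n)$; $S_t=\max\{z_m\in Z_\theta: I_t\le z_m\le S^U_t,\ H_t(z_m)=\min\{H_t(z_n):z_n\in Z_\theta, I_t\le z_n\le S^U_t\}\}$; $s_t=S_t$ if $K_t=0$, else $s_t=\min\{z_m\in Z_\theta:\bar I_t\le z_m\le S_t,\ H_t(z_m)\le H_t(S_t)+K_t\}$. Upper estimate functions. $\bar\psi_{T-1}(x,y)=\gamma_{T-1}x$ for all $x,y$; $\bar\varphi_{T-1}(x,y)=0$ if $y<s_{T-1}$ and $\bar\varphi_{T-1}(x,y)=\gamma_{T-1}x$ if $y\ge s_{T-1}$. For $t=0,\dots,T-2$: $\bar\psi_t(x,y)=\gamma_tx$ if $y<s_{t+1}-\theta$, and otherwise $\bar\psi_t(x,y)=\gamma_tx+\alpha\sum_{m=-1}^{n-1}\bar\varphi_{t+1}(x,y-z_m)f_t(m)$, where $n$ is the integer with $z_{n-1}\le y-s_{t+1}<z_n$;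 and $\bar\varphi_t(x,y)=0$ if $y<s_t$, $\bar\varphi_t(x,y)=\bar\psi_t(y-s_t+\theta,y)$ if $y\ge s_t$ and $y-x<s_t$, $\bar\varphi_t(x,y)=\bar\psi_t(x,y)$ if $y\ge s_t$ and $y-x\ge s_t$. *)

From HB Require Import structures.
From mathcomp Require Import all_boot all_order all_algebra.
From mathcomp Require Import all_classical all_reals all_analysis.
Set Implicit Arguments. Unset Strict Implicit. Unset Printing Implicit Defensive.
Import Order.TTheory GRing.Theory Num.Theory.
Import numFieldNormedType.Exports.
Local Open Scope classical_set_scope.
Local Open Scope ring_scope.

Definition convex_fun {R : realType} (g : R -> R) : Prop :=
  forall (x y l : R), 0 <= l -> l <= 1 ->
    g (l * x + (1 - l) * y) <= l * g x + (1 - l) * g y.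

Definition coercive {R : realType} (g : R -> R) : Prop :=
  forall M : R, exists N : R, forall y : R, N <= `|y| -> M <= g y.

Definition mutually_independent_RVs {d} {Omega : measurableType d}
  {R : realType} (P : probability Omega R) (T : nat) (X : nat -> {RV P >-> R})
  : Prop :=
  forall (I : seq nat) (B : nat -> set R),
    uniq I -> all (fun t => (t < T)%N) I ->
    (forall t, measurable (B t)) ->
    P (\big[setI/setT]_(t <- I) (X t @^-1` B t)) =
    (\prod_(t <- I) P (X t @^-1` B t))%E.

Section Model.
Variables (R : realType) (T : nat) (alpha : R) (c : nat -> R) (K : nat -> R)
  (G : nat -> R -> R) (F : nat -> R -> R) (mu : nat -> R) (theta : R)
  (sT1 : R) (gamma : nat -> R).

Definition z (m : int) : R := m%:~R * theta.
Definition on_grid (y : R) : Prop := exists m : int, y = z m.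
Definition gridmax (Q : R -> Prop) : R := sup [set y | on_grid y /\ Q y].
Definition gridmin (Q : R -> Prop) : R := inf [set y | on_grid y /\ Q y].

Definition Cfun (t : nat) (y : R) : R :=
  (c t - alpha * c t.+1) * y + G t y + alpha * c t.+1 * mu t.

Definition fdisc (t : nat) (n : int) : R := F t (z (n + 1)) - F t (z n).

Definition Cm (t : nat) : R := inf [set y | forall x, Cfun t y <= Cfun t x].
Definition zn0 (t : nat) : R := gridmax (fun y => y < Cm t).
Definition SU (t : nat) : R :=
  gridmin (fun y => Cm t <= y /\ Cfun t (zn0 t) + K t < Cfun t y).

Record stage := Stage { sH : R -> R; sS : R; ss : R; sbarI : R }.

Definition Vof (t : nat) (st : stage) (y : R) : R :=
  if y < ss st then sH st (sS st) + K t else sH st y.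

(* sum_{n = -1}^oo u n, as the limit of partial sums (index k = n + 1) *)
Definition sum_from_m1 (u : int -> R) : R :=
  limn (series (fun k : nat => u (k%:Z - 1))).

Definition stage_base : stage :=
  Stage (Cfun T.-1) (Cm T.-1) sT1 sT1.

Definition stage_step (t : nat) (nx : stage) : stage :=
  let I := gridmax (fun y => y < Num.min (sbarI nx - theta) (Cm t)) in
  let bI := gridmax (fun y => y <= I /\ Cfun t I + K t < Cfun t y) + theta in
  let H := fun y => Cfun t y +
             alpha * sum_from_m1 (fun n => Vof t.+1 nx (y - z n) * fdisc t n) in
  let Hmin := inf [set H y | y in [set y | on_grid y /\ I <= y <= SU t]] in
  let S := gridmax (fun y => I <= y <= SU t /\ H y = Hmin) in
  let s := if K t == 0 then S
           else gridmin (fun y => bI <= y <= S /\ H y <= H S + K t) in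
  Stage H S s bI.

(* stage_k k is the data of period t = T-1-k *)
Fixpoint stage_k (k : nat) : stage :=
  match k with
  | 0 => stage_base
  | k'.+1 => stage_step (T - 2 - k') (stage_k k')
  end.

Definition stage_of (t : nat) : stage := stage_k (T.-1 - t).
Definition H (t : nat) : R -> R := sH (stage_of t).
Definition S (t : nat) : R := sS (stage_of t).
Definition s (t : nat) : R := ss (stage_of t).
Definition barI (t : nat) : R := sbarI (stage_of t).
Definition V (t : nat) : R -> R := Vof t (stage_of t).

Definition psi_step (t : nat) (phinext : R -> R -> R) (x y : R) : R :=
  if y < s t.+1 - theta then gamma t * x
  else
    let n := Num.floor ((y - s t.+1) / theta) + 1 in
    (* n is the integer with z_{n-1} <= y - s_{t+1} < z_n; sum over m = -1..n-1 *)
    gamma t * x + alpha *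
      \sum_(0 <= j < absz (n + 1)) (phinext x (y - z (j%:Z - 1)) * fdisc t (j%:Z - 1)).

Definition phi_from (t : nat) (psi : R -> R -> R) (x y : R) : R :=
  if y < s t then 0
  else if y - x < s t then psi (y - s t + theta) y
  else psi x y.

Fixpoint phi_k (k : nat) : R -> R -> R :=
  match k with
  | 0 => fun x y => if y < s T.-1 then 0 else gamma T.-1 * x
  | k'.+1 => phi_from (T - 2 - k') (psi_step (T - 2 - k') (phi_k k'))
  end.

Definition phibar (t : nat) : R -> R -> R := phi_k (T.-1 - t).
Definition psibar (t : nat) : R -> R -> R :=
  if t == T.-1 then fun x _ => gamma t * x else psi_step t (phibar t.+1).

End Model.

From Pilot Require Import Defs.
From HB Require Import structures.
From mathcomp Require Import all_boot all_order all_algebra.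
From mathcomp Require Import all_classical all_reals all_analysis.
From mathcomp Require Import lra zify.
Import Order.TTheory GRing.Theory Num.Theory.
Import numFieldNormedType.Exports.
Local Open Scope classical_set_scope.
Local Open Scope ring_scope.

(* H_t is C_t plus alpha times an average of V_{t+1}
   at the shifted points x - z_n, so an increment bound phibar_{t+1} for V_{t+1}
   gives the bound psi_step for H_t, with the Lipschitz constant of C_t for the
   C_t part; V_{t+1} is constant below s_{t+1}, which truncates the average to
   the finitely many shifts landing above s_{t+1}.  V_t equals H_t from s_t on and
   the constant H_t(S_t) + K_t below it, and the grid choice of s_t provides a
   point y in [s_t - theta, s_t] with H_t(y) >= H_t(S_t) + K_t; comparing with y
   turns the bound for H_t into phibar_t.  At t = T-1, H = C is gamma-Lipschitz
   and s_{T-1} itself is such a point. *)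

Section Grid.
Context {R : realType} {th : R}.
Hypothesis th_gt0 : 0 < th.

Lemma on_grid_gap {a b : R} : on_grid th a -> on_grid th b -> a < b -> a + th <= b.
Proof.
move=> [m ->] [n ->]; rewrite /z ltr_pM2r // ltr_int -lezD1.
by rewrite -(ler_int R) -(ler_pM2r th_gt0) intrD mulrDl mul1r.
Qed.

Lemma on_grid_addr {a : R} : on_grid th a -> on_grid th (a + th).
Proof. by move=> [m ->]; exists (m + 1); rewrite /z intrD mulrDl mul1r. Qed.

Lemma on_grid_subr {a : R} : on_grid th a -> on_grid th (a - th).
Proof. by move=> [m ->]; exists (m - 1); rewrite /z intrD mulrDl mulN1r. Qed.

Lemma on_grid_addn (a : R) (k : nat) : on_grid th a -> on_grid th (a + k%:R * th).
Proof. by move=> [m ->]; exists (m + k%:Z); rewrite /z intrD mulrDl. Qed.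

Lemma z_pred_ge (k : nat) : - th <= z th (k%:Z - 1).
Proof.
rewrite /z intrD mulrDl mulN1r.
have : 0 <= (k%:Z)%:~R * th :> R by apply: mulr_ge0; [rewrite ler0z | exact: ltW].
lra.
Qed.

Lemma exists_grid_below (r : R) : exists y, on_grid th y /\ y < r.
Proof.
exists (z th (Num.floor (r / th) - 1)); split; first by exists (Num.floor (r / th) - 1).
rewrite /z intrD mulrDl mulN1r.
have := th_gt0; have := floor_le (r / th).
rewrite -(ler_pM2r th_gt0) mulfVK ?gt_eqF //; lra.
Qed.

Lemma exists_grid_above (r : R) : exists y, on_grid th y /\ r < y.
Proof.
exists (z th (Num.floor (r / th) + 1)); split; first by exists (Num.floor (r / th) + 1).
have /andP[_] := floor_itv (r / th).
by rewrite /z -(ltr_pM2r th_gt0) mulfVK ?gt_eqF.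
Qed.

(* The index bound is the upper limit of the sum in [psi_step]. *)
Lemma z_pred_gt (r : R) (j : nat) : - th <= r ->
  (absz (Num.floor (r / th) + 1 + 1)%R <= j)%N -> r < z th (j%:Z - 1).
Proof.
move=> r_ge j_ge.
have fl_ge : -1 <= Num.floor (r / th).
  by rewrite floor_ge_int ler_pdivlMr //; rewrite mulN1r.
have fl_le : Num.floor (r / th) + 1 <= j%:Z - 1 by lia.
apply: lt_le_trans (_ : (Num.floor (r / th) + 1)%:~R * th <= _).
  have /andP[_] := floor_itv (r / th).
  by rewrite -(ltr_pM2r th_gt0) mulfVK ?gt_eqF.
by rewrite /z ler_pM2r // ler_int.
Qed.

Lemma coercive_grid_below (f : R -> R) (M r : R) : coercive f ->
  exists y, on_grid th y /\ (y < r /\ M < f y).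
Proof.
move=> /(_ (M + 1)) [N fN].
have [y [gy]] := exists_grid_below (Num.min r (- `|N|)); rewrite lt_min => /andP[yr yN].
exists y; split => //; split => //.
suff /fN : N <= `|y| by lra.
by rewrite (le_trans (ler_norm N)) // ler_normr; lra.
Qed.

Lemma coercive_grid_above (f : R -> R) (M r : R) : coercive f ->
  exists y, on_grid th y /\ (r < y /\ M < f y).
Proof.
move=> /(_ (M + 1)) [N fN].
have [y [gy]] := exists_grid_above (Num.max r `|N|); rewrite gt_max => /andP[ry Ny].
exists y; split => //; split => //.
suff /fN : N <= `|y| by lra.
by rewrite (le_trans (ler_norm N)) // ler_normr; lra.
Qed.

Lemma gridmaxP {Q : R -> Prop} :
  (exists y, on_grid th y /\ Q y) ->
  (exists b, forall y, on_grid th y -> Q y -> y <= b) ->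
  [/\ on_grid th (gridmax th Q), Q (gridmax th Q) &
      forall y, on_grid th y -> Q y -> y <= gridmax th Q].
Proof.
move=> [y0 gQy0] [b hb]; rewrite /gridmax; set E := [set y | on_grid th y /\ Q y].
have supE : has_sup E by split; [exists y0 | exists b => y [gy Qy]; exact: hb].
have ubE := ub_le_sup (proj2 supE).
have [e Ee e_gt] := sup_adherent th_gt0 supE.
have e_eq : e = sup E.
  apply/eqP; rewrite eq_le ubE //= leNgt; apply/negP => lt_e.
  have [e' Ee' e'_gt] := sup_adherent (ltac:(by rewrite subr_gt0) : 0 < sup E - e) supE.
  have := on_grid_gap Ee.1 Ee'.1 ltac:(lra); have := ubE _ Ee'; lra.
rewrite -e_eq; split; [exact: Ee.1 | exact: Ee.2 |].
by move=> y gy Qy; rewrite e_eq; apply: ubE.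
Qed.

Lemma gridminP {Q : R -> Prop} :
  (exists y, on_grid th y /\ Q y) ->
  (exists b, forall y, on_grid th y -> Q y -> b <= y) ->
  [/\ on_grid th (gridmin th Q), Q (gridmin th Q) &
      forall y, on_grid th y -> Q y -> gridmin th Q <= y].
Proof.
move=> [y0 gQy0] [b hb]; rewrite /gridmin; set E := [set y | on_grid th y /\ Q y].
have infE : has_inf E by split; [exists y0 | exists b => y [gy Qy]; exact: hb].
have lbE := ge_inf (proj2 infE).
have [e Ee e_lt] := inf_adherent th_gt0 infE.
have e_eq : e = inf E.
  apply/eqP; rewrite eq_le lbE // andbT leNgt; apply/negP => lt_e.
  have [e' Ee' e'_lt] := inf_adherent (ltac:(by rewrite subr_gt0) : 0 < e - inf E) infE.
  have := on_grid_gap Ee'.1 Ee.1 ltac:(lra); have := lbE _ Ee'; lra.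
rewrite -e_eq; split; [exact: Ee.1 | exact: Ee.2 |].
by move=> y gy Qy; rewrite e_eq; apply: lbE.
Qed.

Lemma grid_argmin_from (f : R -> R) (a : R) (k : nat) : on_grid th a ->
  exists y0, [/\ on_grid th y0, a <= y0 <= a + k%:R * th &
    forall y, on_grid th y -> a <= y <= a + k%:R * th -> f y0 <= f y].
Proof.
move=> ga; have th_pos := th_gt0.
elim: k => [|k [y1 [gy1 /andP[ay1 y1k] y1_min]]].
  exists a; rewrite mul0r addr0 lexx; split => // y _ /andP[ay ya].
  by rewrite (@le_anti _ _ y a) ?ay ?ya.
set ak := a + k%:R * th; have gak : on_grid th ak by exact: on_grid_addn.
have -> : a + k.+1%:R * th = ak + th by rewrite -natr1 mulrDl mul1r addrA.
have kth_ge0 : 0 <= k%:R * th by rewrite mulr_ge0 // ltW.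
have split_range y : on_grid th y -> a <= y <= ak + th -> (a <= y <= ak) \/ y = ak + th.
  move=> gy /andP[ay yk1]; case: (leP y ak) => yk; first by left; apply/andP.
  by right; apply/le_anti; rewrite yk1 (on_grid_gap gak gy yk).
case: (ltP (f (ak + th)) (f y1)) => f_lt.
  exists (ak + th); split; [exact: on_grid_addr | rewrite lexx andbT /ak; lra |].
  by move=> y gy /(split_range y gy) [/(y1_min y gy)|->]; [exact: le_trans (ltW f_lt)|].
exists y1; split => //; first by rewrite ay1 /= /ak; lra.
by move=> y gy /(split_range y gy) [/(y1_min y gy)|->].
Qed.

Lemma grid_argmin (f : R -> R) {a b : R} : on_grid th a -> a <= b ->
  exists y0, [/\ on_grid th y0, a <= y0 <= b &
    forall y, on_grid th y -> a <= y <= b -> f y0 <= f y].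
Proof.
move=> ga ab; have [ma ea] := ga; set mb := Num.floor (b / th).
have mab : ma <= mb by rewrite /mb floor_ge_int ler_pdivlMr // -/(z th ma) -ea.
have zmb : a + (absz (mb - ma))%:R * th = z th mb.
  by rewrite ea /z natr_absz ger0_norm ?subr_ge0 // intrB -mulrDl addrC subrK.
have [y0 [gy0 /andP[ay0 y0b] y0_min]] := grid_argmin_from f a (absz (mb - ma)) ga.
rewrite zmb in y0b y0_min.
have zb : z th mb <= b by rewrite /z -ler_pdivlMr // floor_le.
exists y0; split => //; first by rewrite ay0 (le_trans y0b).
move=> y [m ->] /andP[ay yb]; apply: y0_min; first by exists m.
by rewrite ay /z ler_pM2r // ler_int /mb floor_ge_int ler_pdivlMr.
Qed.

End Grid.

Lemma nat_down_ind (P : nat -> Prop) (n : nat) :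
  P n -> (forall t, (t < n)%N -> P t.+1 -> P t) -> forall t, (t <= n)%N -> P t.
Proof.
move=> Pn IH t; have [k ek] : exists k, (n - t)%N = k by exists (n - t)%N.
elim: k t ek => [|k IHk] t ek tn; first by have -> : t = n by lia.
by apply: IH; [lia | apply: IHk; lia].
Qed.

Lemma limn_series_sub_le {R : realType} {u v w : nat -> R} {N : nat} :
  cvgn (series u) -> cvgn (series v) -> (forall k, u k - v k <= w k) ->
  (forall k, (N <= k)%N -> w k = 0) ->
  limn (series u) - limn (series v) <= \sum_(0 <= k < N) w k.
Proof.
move=> cvg_u cvg_v uvw w_eq0; rewrite -lim_seriesB //.
apply: limr_le; first exact: is_cvg_seriesB.
exists N => // M /= NM; rewrite /series /=.
apply: le_trans (ler_sum _ (fun k _ => uvw k)) _.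
rewrite (big_cat_nat (leq0n N) NM) /= [X in _ + X]big_nat_cond.
by rewrite [X in _ + X]big1 ?addr0 // => k /andP[/andP[/w_eq0]].
Qed.

Lemma fdisc_cdf_ge0 {d} {Omega : measurableType d} {R : realType}
    {P : probability Omega R} (D : nat -> {RV P >-> R}) (theta : R) t n :
  0 < theta -> 0 <= fdisc (fun t r => fine (cdf (D t) r)) theta t n.
Proof.
move=> theta_gt0; rewrite /fdisc subr_ge0.
have cdf_fin r : cdf (D t) r \is a fin_num.
  by rewrite ge0_fin_numE ?cdf_ge0 // (le_lt_trans (cdf_le1 _ _)) ?ltry.
apply: fine_le; [exact: cdf_fin | exact: cdf_fin |].
by apply: cdf_nondecreasing; rewrite /z ler_pM2r // ler_int lerDl.
Qed.

Lemma Vof_sub_le (R : realType) (K : nat -> R) (t : nat) (st : stage R)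
    (th : R) (psi : R -> R -> R) :
  (forall x' x, x' <= x -> sH st x' - sH st x <= psi (x - x') x) ->
  (forall y, {homo psi^~ y : a b / a <= b}) ->
  (exists2 y, ss st - th <= y <= ss st & sH st (sS st) + K t <= sH st y) ->
  forall x' x, x' <= x ->
  Vof K t st x' - Vof K t st x <=
    (if x < ss st then 0
     else if x - (x - x') < ss st then psi (x - ss st + th) x
     else psi (x - x') x).
Proof.
move=> H_sub psi_homo [y /andP[s_le_y y_le_s] H_jump] x' x le_x'x.
have -> : x - (x - x') = x' by rewrite opprB addrC subrK.
rewrite /Vof; case: (ltP x (ss st)) => [x_lt | s_le_x].
  by rewrite ifT ?subrr //; exact: le_lt_trans x_lt.
case: (ltP x' (ss st)) => [_ | _]; last exact: H_sub.
have := H_sub y x (le_trans y_le_s s_le_x).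
have : psi (x - y) x <= psi (x - ss st + th) x by apply: psi_homo; lra.
lra.
Qed.

Section UpperEstimates.
Variables (R : realType) (T : nat) (alpha : R) (c K : nat -> R)
  (G F : nat -> R -> R) (mu : nat -> R) (theta sT1 : R) (gamma : nat -> R).

Local Notation C := (Cfun alpha c G mu).
Local Notation stage_of := (stage_of T alpha c K G F mu theta sT1).
Local Notation H := (H T alpha c K G F mu theta sT1).
Local Notation S := (S T alpha c K G F mu theta sT1).
Local Notation s := (s T alpha c K G F mu theta sT1).
Local Notation barI := (barI T alpha c K G F mu theta sT1).
Local Notation V := (V T alpha c K G F mu theta sT1).
Local Notation psi_step := (psi_step T alpha c K G F mu theta sT1 gamma).
Local Notation phi_from := (phi_from T alpha c K G F mu theta sT1).
Local Notation phibar := (phibar T alpha c K G F mu theta sT1 gamma).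
Local Notation psibar := (psibar T alpha c K G F mu theta sT1 gamma).

Hypothesis T_gt0 : (0 < T)%N.
Hypothesis alpha_gt0 : 0 < alpha.
Hypothesis theta_gt0 : 0 < theta.
Hypothesis K_ge0 : forall t, (t < T)%N -> 0 <= K t.
Hypothesis C_coercive : forall t, (t < T)%N -> coercive (C t).
Hypothesis sT1_jump : C T.-1 sT1 = C T.-1 (Cm alpha c G mu T.-1) + K T.-1.
Hypothesis fdisc_ge0 : forall t n, 0 <= fdisc F theta t n.
Hypothesis V_summable : forall t, (t.+2 <= T)%N -> forall y : R,
  cvgn (series (fun k : nat =>
    `|V t.+1 (y - z theta (k%:Z - 1)) * fdisc F theta t (k%:Z - 1)|)).
Hypothesis gamma_ge0 : forall t, (t < T)%N -> 0 <= gamma t.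
Hypothesis C_lipschitz : forall t, (t < T)%N -> forall x y : R,
  `|C t x - C t y| <= gamma t * `|x - y|.

(* [step_I] is the paper's I_t and [step_b0 + theta] its \bar I_t. *)
Definition step_I t (nx : stage R) : R :=
  gridmax theta (fun y => y < Num.min (sbarI nx - theta) (Cm alpha c G mu t)).

Definition step_b0 t nx : R :=
  gridmax theta (fun y => y <= step_I t nx /\ C t (step_I t nx) + K t < C t y).

Definition step_H t nx (y : R) : R :=
  C t y + alpha * sum_from_m1 (fun n => Vof K t.+1 nx (y - z theta n) * fdisc F theta t n).

Definition step_Hmin t nx : R :=
  inf [set step_H t nx y | y in
       [set y | on_grid theta y /\ step_I t nx <= y <= SU alpha c K G mu theta t]].

Definition step_S t nx : R :=
  gridmax theta (fun y => step_I t nx <= y <= SU alpha c K G mu theta t /\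
                          step_H t nx y = step_Hmin t nx).

Definition step_s t nx : R :=
  if K t == 0 then step_S t nx
  else gridmin theta (fun y => step_b0 t nx + theta <= y <= step_S t nx /\
                               step_H t nx y <= step_H t nx (step_S t nx) + K t).

Lemma stage_stepE t nx : stage_step alpha c K G F mu theta t nx =
  Stage (step_H t nx) (step_S t nx) (step_s t nx) (step_b0 t nx + theta).
Proof. by []. Qed.

Section Step.
Context {t : nat} {nx : stage R}.
Hypothesis t_lt_T : (t < T)%N.
Hypothesis nx_barI_le_s : sbarI nx <= ss nx.

Local Notation I := (step_I t nx).
Local Notation b0 := (step_b0 t nx).
Local Notation Ht := (step_H t nx).
Local Notation St := (step_S t nx).
Local Notation SU := (SU alpha c K G mu theta t).

Lemma step_I_spec : on_grid theta I /\ I < Num.min (sbarI nx - theta) (Cm alpha c G mu t).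
Proof.
have [gI I_lt _] :
    [/\ on_grid theta I, I < Num.min (sbarI nx - theta) (Cm alpha c G mu t) & _]
  := gridmaxP theta_gt0 (exists_grid_below theta_gt0 _) (ex_intro _ _ (fun y _ y_lt => ltW y_lt)).
by split.
Qed.

Lemma step_b0_spec : [/\ on_grid theta b0, b0 + theta <= I & C t I + K t < C t b0].
Proof.
have [gI _] := step_I_spec.
have ex_b0 : exists y, on_grid theta y /\ (y <= I /\ C t I + K t < C t y).
  have [y [gy [y_lt C_y]]] :=
    coercive_grid_below theta_gt0 (C t) (C t I + K t) I (C_coercive _ t_lt_T).
  by exists y; split => //; split => //; exact: ltW.
have [gb0 [b0_le_I C_b0] _] :
    [/\ on_grid theta b0, b0 <= I /\ C t I + K t < C t b0 & _]
  := gridmaxP theta_gt0 ex_b0 ltac:(by exists I => y _ []).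
split => //; apply: on_grid_gap => //; rewrite lt_neqAle b0_le_I andbT.
by apply/eqP => b0_eq; rewrite b0_eq in C_b0; have := K_ge0 _ t_lt_T; lra.
Qed.

Lemma step_I_le_SU : I <= SU.
Proof.
have ex_SU : exists y, on_grid theta y /\
    (Cm alpha c G mu t <= y /\ C t (zn0 alpha c G mu theta t) + K t < C t y).
  have [y [gy [y_gt C_y]]] := coercive_grid_above theta_gt0 (C t)
    (C t (zn0 alpha c G mu theta t) + K t) (Cm alpha c G mu t) (C_coercive _ t_lt_T).
  by exists y; split => //; split => //; exact: ltW.
have [_ [Cm_le_SU _] _] :
    [/\ on_grid theta SU,
        Cm alpha c G mu t <= SU /\ C t (zn0 alpha c G mu theta t) + K t < C t SU & _]
  := gridminP theta_gt0 ex_SU ltac:(by exists (Cm alpha c G mu t) => y _ []).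
have [_] := step_I_spec; rewrite lt_min => /andP[_ I_lt].
exact: ltW (lt_le_trans I_lt Cm_le_SU).
Qed.

Lemma step_S_spec : [/\ on_grid theta St, I <= St & Ht St <= Ht I].
Proof.
have [gI _] := step_I_spec.
have [y0 [gy0 y0_in y0_min]] := grid_argmin theta_gt0 Ht gI step_I_le_SU.
have Hmin_eq : step_Hmin t nx = Ht y0.
  set E := [set Ht y | y in [set y | on_grid theta y /\ I <= y <= SU]].
  have lbE : lbound E (Ht y0) by move=> _ [y [gy y_in] <-]; exact: y0_min.
  have Ey0 : E (Ht y0) by exists y0.
  apply/le_anti; rewrite (ge_inf (ex_intro _ _ lbE) Ey0) /=.
  by apply: lb_le_inf => //; exists (Ht y0).
have ex_S : exists y, on_grid theta y /\ ((I <= y <= SU) /\ Ht y = step_Hmin t nx).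
  by exists y0; split => //; split => //; rewrite Hmin_eq.
have [gS [/andP[I_le_S _] HS] _] :
    [/\ on_grid theta St, (I <= St <= SU) /\ Ht St = step_Hmin t nx & _]
  := gridmaxP theta_gt0 ex_S ltac:(by exists SU => y _ [/andP[]]).
by split => //; rewrite HS Hmin_eq; apply: y0_min => //; rewrite lexx step_I_le_SU.
Qed.

(* Below [ss nx - theta] every shifted argument [y - z n], [n >= -1], lies in the
   setup region of the next period, where [Vof] is constant. *)
Lemma step_H_sub_below (y y' : R) : y < ss nx - theta -> y' < ss nx - theta ->
  Ht y - Ht y' = C t y - C t y'.
Proof.
move=> y_lt y'_lt; rewrite /step_H.
suff -> : sum_from_m1 (fun n => Vof K t.+1 nx (y - z theta n) * fdisc F theta t n) =
          sum_from_m1 (fun n => Vof K t.+1 nx (y' - z theta n) * fdisc F theta t n).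
  lra.
rewrite /sum_from_m1; congr (limn (series _)); apply/funext => k /=.
have z_ge := z_pred_ge theta_gt0 k.
by rewrite /Vof !ifT //; lra.
Qed.

Lemma step_jump :
  (exists2 y, step_s t nx - theta <= y <= step_s t nx & Ht St + K t <= Ht y) /\
  b0 + theta <= step_s t nx.
Proof.
have [gb0 b0_le_I C_b0] := step_b0_spec.
have [gS I_le_S HS_le] := step_S_spec.
have K_ge0t := K_ge0 _ t_lt_T; have th_gt0 := theta_gt0; have bI_le := nx_barI_le_s.
rewrite /step_s; case: eqP => [K_eq0 | _].
  split; last lra.
  by exists St; [rewrite lexx andbT; lra | rewrite K_eq0 addr0].
set sv := gridmin theta _.
have [gs [/andP[b0_le_s s_le_S] _] s_min] :
    [/\ on_grid theta sv, (b0 + theta <= sv <= St) /\ Ht sv <= Ht St + K t &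
        forall y, on_grid theta y ->
          (b0 + theta <= y <= St) /\ Ht y <= Ht St + K t -> sv <= y].
  apply: gridminP => //; last by exists (b0 + theta) => y _ [/andP[]].
  by exists St; split => //; split; [apply/andP; split; lra | lra].
(* Either [sv - theta] is a grid point of the search range, excluded by the
   minimality of [sv], or [sv - theta = b0], where C_t exceeds C_t(I) + K_t
   while the expectation part of H_t is the same as at I. *)
split => //; exists (sv - theta); first by rewrite lexx /=; lra.
case: (ltP (sv - theta) (b0 + theta)) => [lt_b0 | b0_le].
  have sv_eq : sv = b0 + theta.
    apply/le_anti; rewrite b0_le_s andbT leNgt; apply/negP => lt_sv.
    by have := on_grid_gap theta_gt0 (on_grid_addr gb0) gs lt_sv; lra.
  rewrite sv_eq addrK.
  have [_] := step_I_spec; rewrite lt_min => /andP[I_lt _].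
  by have := step_H_sub_below b0 I ltac:(lra) ltac:(lra); lra.
rewrite leNgt; apply/negP => H_lt.
have := s_min (sv - theta) (on_grid_subr gs); lra.
Qed.

End Step.

Lemma stage_of_step t : (t < T.-1)%N ->
  stage_of t = stage_step alpha c K G F mu theta t (stage_of t.+1).
Proof.
move=> t_lt; rewrite /Defs.stage_of.
have -> : (T.-1 - t = (T.-1 - t.+1).+1)%N by lia.
transitivity (stage_step alpha c K G F mu theta (T - 2 - (T.-1 - t.+1))
  (stage_k T alpha c K G F mu theta sT1 (T.-1 - t.+1))); first by [].
by have -> : (T - 2 - (T.-1 - t.+1) = t)%N by lia.
Qed.

Lemma stage_of_last : stage_of T.-1 = stage_base T alpha c G mu sT1.
Proof. by rewrite /Defs.stage_of subnn. Qed.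

Lemma phibar_step t : (t < T.-1)%N -> phibar t = phi_from t (psi_step t (phibar t.+1)).
Proof.
move=> t_lt; rewrite /Defs.phibar.
have -> : (T.-1 - t = (T.-1 - t.+1).+1)%N by lia.
transitivity (phi_from (T - 2 - (T.-1 - t.+1)) (psi_step (T - 2 - (T.-1 - t.+1))
  (phi_k T alpha c K G F mu theta sT1 gamma (T.-1 - t.+1)))); first by [].
by have -> : (T - 2 - (T.-1 - t.+1) = t)%N by lia.
Qed.

Lemma phibar_last : phibar T.-1 = fun x y => if y < s T.-1 then 0 else gamma T.-1 * x.
Proof. by rewrite /Defs.phibar subnn. Qed.

Lemma barI_le_s t : (t < T)%N -> barI t <= s t.
Proof.
move=> t_lt_T; have : (t <= T.-1)%N by lia.
move: t {t_lt_T}; apply: nat_down_ind => [|t t_lt IH].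
  by rewrite /Defs.barI /Defs.s stage_of_last.
rewrite /Defs.barI /Defs.s stage_of_step // stage_stepE /=.
by apply: (step_jump _ IH).2; lia.
Qed.

Lemma stage_jump t : (t < T.-1)%N ->
  exists2 y, s t - theta <= y <= s t & H t (S t) + K t <= H t y.
Proof.
move=> t_lt; rewrite /Defs.s /Defs.H /Defs.S stage_of_step // stage_stepE /=.
have [t_lt_T t1_lt_T] : (t < T)%N /\ (t.+1 < T)%N by split; lia.
exact: (step_jump t_lt_T (barI_le_s _ t1_lt_T)).1.
Qed.

Lemma C_sub_le {t} {x' x : R} : (t < T)%N -> x' <= x ->
  C t x' - C t x <= gamma t * (x - x').
Proof.
move=> t_lt_T le_x'x; have := C_lipschitz _ t_lt_T x' x.
rewrite [`|x' - x|]distrC [`|x - x'|]ger0_norm ?subr_ge0 //.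
exact: le_trans (ler_norm _).
Qed.

Lemma psi_step_homo t (phin : R -> R -> R) (y : R) : (t < T)%N ->
  (forall y, {homo phin^~ y : a b / a <= b}) ->
  {homo (psi_step t phin)^~ y : a b / a <= b}.
Proof.
move=> t_lt_T phin_homo a b le_ab; have g_ge0 := gamma_ge0 _ t_lt_T.
rewrite /Defs.psi_step; case: ifP => _; first exact: ler_wpM2l.
apply: lerD; first exact: ler_wpM2l.
apply: ler_wpM2l; first exact: ltW.
apply: ler_sum => j _; apply: ler_wpM2r => //; exact: phin_homo.
Qed.

Lemma phi_from_homo t (psi : R -> R -> R) (y : R) :
  {homo psi^~ y : a b / a <= b} -> {homo (phi_from t psi)^~ y : a b / a <= b}.
Proof.
move=> psi_homo a b le_ab; have th_gt0 := theta_gt0; rewrite /Defs.phi_from.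
case: ifP => // _; case: (ltP (y - a) (s t)) => [ya_lt | s_le_ya].
  by rewrite ifT ?lexx //; lra.
by case: ifP => _; apply: psi_homo; lra.
Qed.

Lemma phibar_homo t : (t < T)%N -> forall y, {homo (phibar t)^~ y : a b / a <= b}.
Proof.
move=> t_lt_T; have : (t <= T.-1)%N by lia.
move: t {t_lt_T}; apply: nat_down_ind => [|t t_lt IH] y a b le_ab.
  rewrite phibar_last /=; case: ifP => // _.
  by apply: ler_wpM2l => //; apply: gamma_ge0; lia.
rewrite phibar_step //; apply: phi_from_homo => //.
by apply: psi_step_homo => //; lia.
Qed.

Lemma phibar_eq0 t (a y : R) : (t < T)%N -> y < s t -> phibar t a y = 0.
Proof.
move=> t_lt_T y_lt; case: (ltnP t T.-1) => [t_lt | t_ge].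
  by rewrite phibar_step // /Defs.phi_from y_lt.
have t_eq : t = T.-1 by lia.
by rewrite t_eq in y_lt *; rewrite phibar_last y_lt.
Qed.

Lemma H_sub_le t : (t < T.-1)%N ->
  (forall x' x, x' <= x -> V t.+1 x' - V t.+1 x <= phibar t.+1 (x - x') x) ->
  forall x' x, x' <= x -> H t x' - H t x <= psi_step t (phibar t.+1) (x - x') x.
Proof.
move=> t_lt V_sub x' x le_x'x.
pose a y j := V t.+1 (y - z theta (j%:Z - 1)) * fdisc F theta t (j%:Z - 1).
pose b j := phibar t.+1 (x - x') (x - z theta (j%:Z - 1)) * fdisc F theta t (j%:Z - 1).
have H_eq y : H t y = C t y + alpha * limn (series (a y)).
  by rewrite /Defs.H stage_of_step // stage_stepE.
have a_cvg y : cvgn (series (a y)) by apply/normed_cvg/V_summable; lia.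
have ab j : a x' j - a x j <= b j.
  rewrite -mulrBl ler_wpM2r //.
  by have := V_sub _ _ (lerB le_x'x (lexx (z theta (j%:Z - 1)))); rewrite opprB addrA subrK.
have H_sub N : (forall j, (N <= j)%N -> b j = 0) ->
    H t x' - H t x <= gamma t * (x - x') + alpha * \sum_(0 <= j < N) b j.
  move=> b_eq0; rewrite !H_eq.
  have := limn_series_sub_le (a_cvg x') (a_cvg x) ab b_eq0.
  have := C_sub_le (ltac:(lia) : (t < T)%N) le_x'x.
  have := alpha_gt0; nra.
have t1_lt : (t.+1 < T)%N by lia.
have th_gt0 := theta_gt0.
rewrite /Defs.psi_step; case: ifP => [x_lt | /negbT]; last rewrite -leNgt => s_le_x.
  rewrite -[X in _ <= X]addr0; have := H_sub 0%N; rewrite big_geq // mulr0.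
  apply => j _; rewrite /b phibar_eq0 ?mul0r //.
  by have := z_pred_ge theta_gt0 j; lra.
apply: H_sub => j j_ge; rewrite /b phibar_eq0 ?mul0r //.
have := z_pred_gt theta_gt0 _ _ (ltac:(lra) : - theta <= x - s t.+1) j_ge; lra.
Qed.

Lemma V_last_sub_le x' x : x' <= x ->
  V T.-1 x' - V T.-1 x <= phibar T.-1 (x - x') x.
Proof.
move=> le_x'x; have T1_lt : (T.-1 < T)%N by lia.
rewrite phibar_last /Defs.V /Defs.s /Vof stage_of_last /=.
case: (ltP x sT1) => [x_lt | s_le_x].
  by rewrite ifT ?subrr //; exact: le_lt_trans x_lt.
case: (ltP x' sT1) => [x'_lt | _]; last exact: C_sub_le.
rewrite -sT1_jump (le_trans (C_sub_le T1_lt s_le_x)) // ler_wpM2l ?gamma_ge0 //.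
lra.
Qed.

Lemma V_sub_le t : (t < T)%N ->
  forall x' x, x' <= x -> V t x' - V t x <= phibar t (x - x') x.
Proof.
move=> t_lt_T; have : (t <= T.-1)%N by lia.
move: t {t_lt_T}; apply: nat_down_ind => [|t t_lt V_sub]; first exact: V_last_sub_le.
rewrite phibar_step //; apply: Vof_sub_le; first exact: H_sub_le.
  by move=> y; apply: psi_step_homo => [|y' ]; [lia | apply: phibar_homo; lia].
exact: stage_jump.
Qed.

Lemma H_sub_le_psibar t : (t < T)%N ->
  forall x' x, x' <= x -> H t x' - H t x <= psibar t (x - x') x.
Proof.
move=> t_lt_T x' x le_x'x; rewrite /Defs.psibar.
case: eqP => [t_eq | t_neq].
  by rewrite t_eq in t_lt_T *; rewrite /Defs.H stage_of_last; exact: C_sub_le.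
by apply: H_sub_le => //; [lia | apply: V_sub_le; lia].
Qed.

End UpperEstimates.
Theorem lemma4p5 (d : measure_display) (Omega : measurableType d)
  (R : realType) (P : probability Omega R) (D : nat -> {RV P >-> R})
  (T : nat) (alpha : R) (c K : nat -> R) (G : nat -> R -> R)
  (theta sT1 : R) (gamma : nat -> R) :
  let F : nat -> R -> R := fun t r => fine (cdf (D t) r) in
  let mu : nat -> R := fun t => fine ('E_P[D t])%E in
  (2 <= T)%N ->
  0 < alpha -> alpha <= 1 ->
  (* demands: nonnegative, finite means, independent *)
  (forall t, (t < T)%N -> forall w, 0 <= D t w) ->
  (forall t, (t < T)%N -> P.-integrable setT (EFin \o D t)) ->
  @mutually_independent_RVs _ _ _ P T D ->
  (* setup costs *)
  (forall t, (t < T)%N -> 0 <= K t) ->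
  (forall t, (t.+2 <= T)%N -> alpha * K t.+1 <= K t) ->
  (* standing assumption (i) *)
  (forall t, (t < T)%N ->
     convex_fun (Cfun alpha c G mu t) /\ coercive (Cfun alpha c G mu t)) ->
  (* grid *)
  0 < theta ->
  (* s_{T-1} *)
  sT1 <= Cm alpha c G mu T.-1 ->
  Cfun alpha c G mu T.-1 sT1 =
    Cfun alpha c G mu T.-1 (Cm alpha c G mu T.-1) + K T.-1 ->
  (* all expectations appearing are finite *)
  (forall t, (t.+2 <= T)%N -> forall y : R,
     cvgn (series (fun k : nat =>
       `|V T alpha c K G F mu theta sT1 t.+1 (y - z theta (k%:Z - 1))
          * fdisc F theta t (k%:Z - 1)|))) ->
  (* Lipschitz constants *)
  (forall t, (t < T)%N -> 0 <= gamma t) ->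
  (forall t, (t < T)%N -> forall x y : R,
     `|Cfun alpha c G mu t x - Cfun alpha c G mu t y| <= gamma t * `|x - y|) ->
  forall t, (t < T)%N -> forall x' x : R, x' <= x ->
    H T alpha c K G F mu theta sT1 t x' - H T alpha c K G F mu theta sT1 t x
      <= psibar T alpha c K G F mu theta sT1 gamma t (x - x') x /\
    V T alpha c K G F mu theta sT1 t x' - V T alpha c K G F mu theta sT1 t x
      <= phibar T alpha c K G F mu theta sT1 gamma t (x - x') x.
Proof.
move=> F mu T_ge2 alpha_gt0 _ _ _ _ K_ge0 _ C_convex_coercive theta_gt0 _ sT1_jump
  V_summable gamma_ge0 C_lipschitz t t_lt_T x' x le_x'x.
have T_gt0 : (0 < T)%N by lia.
have C_coercive t' : (t' < T)%N -> coercive (Cfun alpha c G mu t').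
  by move=> /C_convex_coercive [].
have fdisc_ge0 t' n : 0 <= fdisc F theta t' n by exact: fdisc_cdf_ge0.
by split; [apply: H_sub_le_psibar | apply: V_sub_le].
Qed.
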